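(* Let $H^{(0)}=0$, $R=R^\top\succ0$, $Q=Q^\top\succeq0$, and let $H^{(i)}$ be generated by $H^{(i+1)}=G+\gamma M(L(H^{(i)}))^\top H^{(i)}M(L(H^{(i)}))$. Then for every $i>0$ and every $x\in\mathbb{R}^n$, $r_0,\dots,r_N\in\mathbb{R}^n$, the control $u=L(H^{(i)})[x^\top,r_1^\top,\dots,r_N^\top]^\top$ is the unique minimizer over $u\in\mathbb{R}^m$ of $\tfrac12 z^\top H^{(i)} z$, where $z=[x^\top,u^\top,r_0^\top,\dots,r_N^\top]^\top$.
   Context: Dimensions: $x,r_j\in\mathbb{R}^n$, $u\in\mathbb{R}^m$, $A\in\mathbb{R}^{n\times n}$, $B\in\mathbb{R}^{n\times m}$, $\gamma\in[0,1)$, $N\in\mathbb{N}$. Symmetric matrices $H$ of size $((N+2)n+m)$ are partitioned into blocks $h_{ab}$, $a,b\in\{x,u,r_0,\dots,r_N\}$. For $H$ with invertible $h_{uu}$, $L(H)=-h_{uu}^{-1}[h_{ux},h_{ur_1},\dots,h_{ur_N}]=[L_x,L_1,\dots,L_N]$, and $L(0):=0$. $G=\begin{bmatrix}Q&0&-Q&0\\0&R&0&0\\-Q&0&Q&0\\0&0&0&0\end{bmatrix}$ (blocks $x$, $u$, $r_0$, $(r_1,\dots,r_N)$). $M(L)$ is the square matrix mapping $[x;u;r_0;\dots;r_N]$ to $[Ax+Bu;\;L_x(Ax+Bu)+L_1r_2+\dots+L_{N-1}r_N;\;r_1;\dots;r_N;\;0]$. *)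

From HB Require Import structures.
From mathcomp Require Import all_boot all_order all_algebra.
Set Implicit Arguments. Unset Strict Implicit. Unset Printing Implicit Defensive.
Import Order.TTheory GRing.Theory Num.Theory.
Local Open Scope ring_scope.

(* Block layout of the big vector z = [x; u; r_0; r_1; ...; r_N] :
   z = col_mx x (col_mx u (col_mx r0 rs)) where rs : 'cV_(N*n) is the
   stack [r_1; ...; r_N] (r_j occupies entries (j-1)*n .. j*n - 1). *)
Notation dim n m N := (n + (m + (n + N * n)))%N.

Section Defs.
Variable F : realFieldType.

Definition sym_mx k (S : 'M[F]_k) := S^T = S.
Definition posdef_mx k (S : 'M[F]_k) :=
  sym_mx S /\ forall v : 'cV[F]_k, v != 0 -> 0 < (v^T *m S *m v) ord0 ord0.
Definition psd_mx k (S : 'M[F]_k) :=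
  sym_mx S /\ forall v : 'cV[F]_k, 0 <= (v^T *m S *m v) ord0 ord0.

Variables (n m N : nat).

Definition h_uu (H : 'M[F]_(dim n m N)) : 'M[F]_m := ulsubmx (drsubmx H).
Definition h_ux (H : 'M[F]_(dim n m N)) : 'M[F]_(m, n) := usubmx (dlsubmx H).
Definition h_urs (H : 'M[F]_(dim n m N)) : 'M[F]_(m, N * n) :=
  rsubmx (ursubmx (drsubmx H)).

(* L(H) = - h_uu^{-1} [h_ux, h_ur1, ..., h_urN] when h_uu is invertible;
   L(0) := 0 (and 0 whenever h_uu is singular). *)
Definition Lgain (H : 'M[F]_(dim n m N)) : 'M[F]_(m, n + N * n) :=
  if h_uu H \in unitmx then - (invmx (h_uu H) *m row_mx (h_ux H) (h_urs H))
  else 0.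

(* shift [r_1;...;r_N] |-> [r_2;...;r_N;0] *)
Definition shiftmx : 'M[F]_(N * n) :=
  \matrix_(i, j) (((j : nat) == i + n)%N)%:R.
(* [r_1;...;r_N] |-> r_1 *)
Definition firstmx : 'M[F]_(n, N * n) :=
  \matrix_(i, j) (((j : nat) == i)%N)%:R.

Variables (A : 'M[F]_n) (B : 'M[F]_(n, m)) (Q : 'M[F]_n) (R : 'M[F]_m).

(* G = [[Q,0,-Q,0],[0,R,0,0],[-Q,0,Q,0],[0,0,0,0]] *)
Definition Gmx : 'M[F]_(dim n m N) :=
  block_mx Q (row_mx 0 (row_mx (- Q) 0))
           (col_mx 0 (col_mx (- Q) 0))
           (block_mx R 0 0 (block_mx Q 0 0 0)).

(* M(L): [x;u;r0;r1..rN] |->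
   [Ax+Bu; Lx(Ax+Bu)+L1 r2+...+L_{N-1} rN; r1; ...; rN; 0] *)
Definition Mmx (L : 'M[F]_(m, n + N * n)) : 'M[F]_(dim n m N) :=
  let Lx := lsubmx L in let Lr := rsubmx L in
  block_mx A (row_mx B (row_mx 0 0))
           (col_mx (Lx *m A) (col_mx 0 0))
           (block_mx (Lx *m B) (row_mx 0 (Lr *m shiftmx))
                     0 (block_mx 0 firstmx 0 shiftmx)).

Fixpoint Hiter (gamma : F) (i : nat) : 'M[F]_(dim n m N) :=
  match i with
  | 0 => 0
  | i'.+1 => let H := Hiter gamma i' in
             Gmx + gamma *: ((Mmx (Lgain H))^T *m H *m Mmx (Lgain H))
  end.

Definition zvec (x : 'cV[F]_n) (u : 'cV[F]_m) (r0 : 'cV[F]_n)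
  (rs : 'cV[F]_(N * n)) : 'cV[F]_(dim n m N) :=
  col_mx x (col_mx u (col_mx r0 rs)).

Definition cost (H : 'M[F]_(dim n m N)) (z : 'cV[F]_(dim n m N)) : F :=
  2^-1 * (z^T *m H *m z) ord0 ord0.

End Defs.

(* For i > 0 we have H = G + gamma M^T H' M with H' positive semidefinite, so
   the u-u block of H is R plus a positive semidefinite matrix, hence positive
   definite. The cost is therefore a strictly convex quadratic in u, and
   completing the square shows that its unique minimizer is
   -h_uu^-1 (h_ux x + h_ur1 r_1 + ... + h_urN r_N). The reference r_0 does not
   enter the minimizer: G has no u-r_0 block and M(L) ignores r_0, so the
   u-r_0 block of H vanishes. *)
From HB Require Import structures.
From mathcomp Require Import all_boot all_order all_algebra ring.
Import Order.TTheory GRing.Theory Num.Theory.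
Local Open Scope ring_scope.
Set Implicit Arguments. Unset Strict Implicit.

Ltac block_simpl := rewrite ?(mul_block_col, mul_row_col, mul_col_mx, mul_mx_row,
  mul_row_block, mul_col_row, mulmx_block, tr_col_mx, tr_row_mx, tr_block_mx,
  trmx0, trmx1, mul0mx, mulmx0, mulmx1, mul1mx, addr0, add0r, col_mx0, row_mx0,
  block_mx0, block_mxKdr, block_mxKul, block_mxKur, block_mxKdl, col_mxKu,
  col_mxKd, row_mxKl, row_mxKr, add_row_mx, add_col_mx).

Section QuadraticForms.
Variable F : realFieldType.

Definition qform k (S : 'M[F]_k) (v : 'cV[F]_k) : F := (v^T *m S *m v) ord0 ord0.

Lemma qform_mulmx k l (S : 'M[F]_l) (M : 'M[F]_(l, k)) (v : 'cV[F]_k) :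
  qform (M^T *m S *m M) v = qform S (M *m v).
Proof. by rewrite /qform trmx_mul !mulmxA. Qed.

Lemma qform_addZ k (S1 S2 : 'M[F]_k) (g : F) (v : 'cV[F]_k) :
  qform (S1 + g *: S2) v = qform S1 v + g * qform S2 v.
Proof. by rewrite /qform mulmxDr mulmxDl -scalemxAr -scalemxAl !mxE. Qed.

Lemma posdef_psd k (S : 'M[F]_k) : posdef_mx S -> psd_mx S.
Proof.
move=> [symS posS]; split=> // v.
by have [->|/posS/ltW //] := eqVneq v 0; rewrite mulmx0 mxE.
Qed.

Lemma posdef_unitmx k (S : 'M[F]_k) : posdef_mx S -> S \in unitmx.
Proof.
move=> [_ posS]; rewrite unitmxE unitfE; apply/negP => /det0P [w w0 wS].
have := posS w^T; rewrite trmx_eq0 => /(_ w0).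
by rewrite trmxK wS mul0mx mxE ltxx.
Qed.

Lemma qform_addKr k l (S : 'M[F]_k) (E : 'M[F]_(k, l)) (z : 'cV[F]_k) (d : 'cV[F]_l) :
  S^T = S -> E^T *m S *m z = 0 ->
  qform S (z + E *m d) = qform S z + qform (E^T *m S *m E) d.
Proof.
move=> symS ESz.
have cross_l : (E *m d)^T *m S *m z = 0.
  by rewrite trmx_mul -!mulmxA [E^T *m _]mulmxA ESz mulmx0.
have cross_r : z^T *m S *m (E *m d) = 0.
  have -> : z^T *m S *m (E *m d) = ((E *m d)^T *m S *m z)^T.
    by rewrite !trmx_mul !trmxK symS !mulmxA.
  by rewrite cross_l trmx0.
rewrite qform_mulmx /qform (linearD trmx) /= mulmxDr !mulmxDl cross_l cross_r.
by rewrite addr0 add0r mxE.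
Qed.

Section Argmin.
Variables (k l : nat) (S : 'M[F]_k) (E : 'M[F]_(k, l)) (w : 'cV[F]_k).
Hypotheses (symS : S^T = S) (posP : posdef_mx (E^T *m S *m E)).

Let P := E^T *m S *m E.
Let ustar := - (invmx P *m (E^T *m S *m w)).

Lemma qform_complete_square u :
  qform S (w + E *m u) = qform S (w + E *m ustar) + qform P (u - ustar).
Proof.
have stationary : E^T *m S *m (w + E *m ustar) = 0.
  rewrite mulmxDr /ustar !mulmxN !mulmxA -/P mulmxV ?posdef_unitmx //.
  by rewrite mul1mx subrr.
by rewrite -qform_addKr // mulmxBr addrCA addrK [E *m u + w]addrC.
Qed.

Lemma qform_argmin :
  (forall u, qform S (w + E *m ustar) <= qform S (w + E *m u)) /\
  (forall u, (forall v, qform S (w + E *m u) <= qform S (w + E *m v)) -> u = ustar).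
Proof.
split=> [u|u umin].
  by rewrite [qform S (w + E *m u)]qform_complete_square lerDl (proj2 (posdef_psd posP)).
have := umin ustar; rewrite [qform S (w + E *m u)]qform_complete_square gerDl.
have [/eqP|/(proj2 posP) uP] := eqVneq (u - ustar) 0; first by rewrite subr_eq0 => /eqP.
by rewrite leNgt uP.
Qed.

End Argmin.
End QuadraticForms.

Section RiccatiIteration.
Variables (F : realFieldType) (n m N : nat).
Local Notation D := (n + (m + (n + N * n)))%N.

Definition embed_u : 'M[F]_(D, m) := col_mx 0 (col_mx 1%:M 0).
Definition embed_r0 : 'M[F]_(D, n) := col_mx 0 (col_mx 0 (col_mx 1%:M 0)).

Lemma h_uuE (H : 'M[F]_D) : h_uu H = embed_u^T *m H *m embed_u.
Proof. by rewrite /h_uu /embed_u -{2}[H]submxK -{2}[drsubmx H]submxK; block_simpl. Qed.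

Lemma embed_u_mul_zvec (H : 'M[F]_D) x rs :
  embed_u^T *m H *m zvec x 0 0 rs = row_mx (h_ux H) (h_urs H) *m col_mx x rs.
Proof.
rewrite /h_ux /h_urs /embed_u /zvec -{1}[H]submxK -{1}[drsubmx H]submxK.
by rewrite -{1}[dlsubmx H]vsubmxK -{1}[ursubmx (drsubmx H)]hsubmxK; block_simpl.
Qed.

Lemma zvec_u x u r0 rs :
  zvec x u r0 rs = zvec x 0 r0 rs + embed_u *m u :> 'cV[F]_D.
Proof. by rewrite /zvec /embed_u; block_simpl. Qed.

Lemma zvec_r0 x r0 rs :
  zvec x 0 r0 rs = zvec x 0 0 rs + embed_r0 *m r0 :> 'cV[F]_D.
Proof. by rewrite /zvec /embed_r0; block_simpl. Qed.

Variables (A : 'M[F]_n) (B : 'M[F]_(n, m)) (Q : 'M[F]_n) (R : 'M[F]_m).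

Lemma Mmx_embed_r0 L : Mmx A B L *m embed_r0 = 0.
Proof. by rewrite /Mmx /embed_r0; block_simpl. Qed.

Lemma Gmx_u_r0 : embed_u^T *m Gmx N Q R *m embed_r0 = 0.
Proof. by rewrite /Gmx /embed_r0 /embed_u; block_simpl. Qed.

Lemma h_uu_Gmx : h_uu (Gmx N Q R) = R.
Proof. by rewrite /h_uu /Gmx; block_simpl. Qed.

Lemma Gmx_sym : sym_mx Q -> sym_mx R -> sym_mx (Gmx N Q R).
Proof. by rewrite /sym_mx /Gmx => symQ symR; block_simpl; rewrite !linearN /= symQ symR. Qed.

Lemma qform_Gmx x u r0 rs :
  qform (Gmx N Q R) (zvec x u r0 rs) = qform Q (x - r0) + qform R u.
Proof.
rewrite /qform /Gmx /zvec; block_simpl.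
rewrite (linearB trmx) /= !mulmxN !mulmxBl !mulmxBr mulmxDl mulNmx.
(* Abstract the 1 x 1 products so that [ring] sees a commutative identity. *)
move: (x^T *m Q *m x) (x^T *m Q *m r0) (r0^T *m Q *m x) (r0^T *m Q *m r0) (u^T *m R *m u).
by move=> a b c d e; rewrite !mxE; ring.
Qed.

Lemma Gmx_psd : psd_mx Q -> psd_mx R -> forall v, 0 <= qform (Gmx N Q R) v.
Proof.
move=> [_ psdQ] [_ psdR] v.
have -> : v = zvec (usubmx v) (usubmx (dsubmx v)) (usubmx (dsubmx (dsubmx v)))
                   (dsubmx (dsubmx (dsubmx v))) by rewrite /zvec !vsubmxK.
by rewrite qform_Gmx; exact: addr_ge0 (psdQ _) (psdR _).
Qed.

Variable gamma : F.
Local Notation Hi := (Hiter N A B Q R gamma).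

Lemma Hiter_sym : sym_mx Q -> sym_mx R -> forall i, sym_mx (Hi i).
Proof.
move=> symQ symR; elim=> [|i IH] /=; first by rewrite /sym_mx trmx0.
by rewrite /sym_mx linearD linearZ /= !trmx_mul trmxK IH Gmx_sym // mulmxA.
Qed.

Lemma Hiter_psd : psd_mx Q -> psd_mx R -> 0 <= gamma -> forall i v, 0 <= qform (Hi i) v.
Proof.
move=> psdQ psdR gamma_ge0; elim=> [|i IH] v /=; first by rewrite /qform mulmx0 mul0mx mxE.
rewrite qform_addZ addr_ge0 ?Gmx_psd // mulr_ge0 //.
by rewrite qform_mulmx; apply: IH.
Qed.

Lemma h_uu_Hiter_posdef i : psd_mx Q -> posdef_mx R -> 0 <= gamma -> (0 < i)%N ->
  posdef_mx (h_uu (Hi i)).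
Proof.
move=> psdQ [symR posR] gamma_ge0; case: i => // i _.
have symH := Hiter_sym (proj1 psdQ) symR i.+1.
split=> [|v v0]; first by rewrite /sym_mx h_uuE !trmx_mul trmxK symH mulmxA.
change (0 < qform (h_uu (Hi i.+1)) v).
rewrite h_uuE qform_mulmx [Hi _]/= qform_addZ -qform_mulmx -h_uuE h_uu_Gmx.
rewrite ltr_wpDr ?posR // mulr_ge0 // qform_mulmx.
exact: (Hiter_psd psdQ (posdef_psd (conj symR posR))).
Qed.

Lemma Hiter_u_r0 i : (0 < i)%N -> embed_u^T *m Hi i *m embed_r0 = 0.
Proof.
case: i => // i _ /=.
rewrite mulmxDr mulmxDl Gmx_u_r0 add0r -scalemxAr -scalemxAl -!mulmxA Mmx_embed_r0.
by rewrite !mulmx0 scaler0.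
Qed.

Lemma Lgain_Hiter_mul i x r0 rs : (0 < i)%N -> (h_uu (Hi i)) \in unitmx ->
  Lgain (Hi i) *m col_mx x rs
  = - (invmx (embed_u^T *m Hi i *m embed_u) *m (embed_u^T *m Hi i *m zvec x 0 r0 rs)).
Proof.
move=> i_gt0 unit_uu.
have cross : embed_u^T *m Hi i *m zvec x 0 r0 rs
              = row_mx (h_ux (Hi i)) (h_urs (Hi i)) *m col_mx x rs.
  by rewrite zvec_r0 mulmxDr mulmxA Hiter_u_r0 // mul0mx addr0 embed_u_mul_zvec.
by rewrite /Lgain unit_uu -h_uuE cross mulNmx mulmxA.
Qed.

End RiccatiIteration.

Arguments embed_u {F n m N}.

Theorem lemma5 (F : realFieldType) (n m N : nat)
  (A : 'M[F]_n) (B : 'M[F]_(n, m)) (Q : 'M[F]_n) (R : 'M[F]_m) (gamma : F) :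
  posdef_mx R -> psd_mx Q -> 0 <= gamma -> gamma < 1 ->
  forall i : nat, (0 < i)%N ->
  forall (x r0 : 'cV[F]_n) (rs : 'cV[F]_(N * n)),
    let H := Hiter N A B Q R gamma i in
    let ustar := Lgain H *m col_mx x rs in
    (forall u : 'cV[F]_m, cost H (zvec x ustar r0 rs)
                          <= cost H (zvec x u r0 rs)) /\
    (forall u : 'cV[F]_m,
       (forall v : 'cV[F]_m, cost H (zvec x u r0 rs) <= cost H (zvec x v r0 rs)) ->
       u = ustar).
Proof.
move=> posR psdQ gamma_ge0 _ i i_gt0 x r0 rs H ustar.
have symH : H^T = H := Hiter_sym N A B gamma (proj1 psdQ) (proj1 posR) i.
have pos_uu := h_uu_Hiter_posdef N A B psdQ posR gamma_ge0 i_gt0.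
have costE u :
    cost H (zvec x u r0 rs) = 2^-1 * qform H (zvec x 0 r0 rs + embed_u *m u).
  by rewrite /cost /qform -zvec_u.
have half_gt0 : (0 : F) < 2^-1 by rewrite invr_gt0 ltr0n.
rewrite h_uuE in pos_uu.
have [minimal unique] := qform_argmin (zvec x 0 r0 rs) symH pos_uu.
rewrite /ustar (Lgain_Hiter_mul x r0) ?posdef_unitmx ?h_uuE //.
split=> [u|u umin]; first by rewrite !costE ler_pM2l.
by apply: unique => v; rewrite -(ler_pM2l half_gt0) -!costE.
Qed.
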